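(* Let $\theta\in[0,1]$ and $\psi=\frac12-\frac{\theta}{4}$. On the cycle graph $C_5$, let $X$ be the capture time measured in rounds in the tipsy cop and drunken robber game, and let $\mathbb{E}^i[X]$ be its expectation when the game starts with cop and robber at distance $i\in\{1,2\}$ and the robber moving first. Then \[ \mathbb{E}^1[X]=\frac{1-\frac{\theta}{4}}{\left(1-\frac{\theta}{4}\right)(2-\psi)-1},\qquad \mathbb{E}^2[X]=\frac{1}{\left(1-\frac{\theta}{4}\right)(2-\psi)-1}. \]
   Context: Tipsy cop and drunken robber game on a graph: a cop and a robber occupy distinct vertices and alternate moves, the robber moving first; on each move the mover must move to an adjacent vertex (no staying put). The robber always moves to a uniformly random neighbor. The cop, independently at each of her moves, with probability $\theta$ moves to a uniformly random neighbor and with probability $1-\theta$ moves to a neighbor that decreases her distance to the robber (onto the robber if adjacent). All random choices are independent; the robber is captured (game over) as soon as both occupy the same vertex. A round consists of one robber move followed by one cop move; the capture time in rounds is $X=n$ if the capture occurs during the $n$-th round (i.e. at move $2n-1$ or $2n$). *)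

From HB Require Import structures.
From mathcomp Require Import all_boot all_order all_algebra.
From mathcomp Require Import all_classical all_reals all_analysis.
Set Implicit Arguments. Unset Strict Implicit. Unset Printing Implicit Defensive.
Import Order.TTheory GRing.Theory Num.Theory.
Local Open Scope ring_scope.

Section TipsyGame.
Variables (R : realType) (V : finType) (adj : rel V).

Fixpoint ball (k : nat) (x : V) : {set V} :=
  if k is k'.+1 then ball k' x :|: [set w | [exists u in ball k' x, adj u w]]
  else [set x].

(* graph distance (= #|V| if y is unreachable from x) *)
Definition gdist (x y : V) : nat := find (fun k => y \in ball k x) (iota 0 #|V|).

Definition deg (v : V) : R := #|[set w | adj v w]|%:R.

Definition greedy (c r : V) : {set V} := [set w | adj c w && (gdist w r < gdist c r)%N].

(* game states (cop vertex, robber vertex) *)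
Definition state := (V * V)%type.

Definition robber_kernel (s t : state) : R :=
  if (t.1 == s.1) && adj s.2 t.2 then (deg s.2)^-1 else 0.

Definition cop_kernel (theta : R) (s t : state) : R :=
  if (t.2 == s.2) && adj s.1 t.1 then
    theta / deg s.1 +
    (if t.1 \in greedy s.1 s.2 then (1 - theta) / #|greedy s.1 s.2|%:R else 0)
  else 0.

Definition step (K : state -> state -> R) (m : {ffun state -> R}) : {ffun state -> R} :=
  [ffun t => \sum_(s : state | s.1 != s.2) m s * K s t].

(* one round: robber move then cop move; mass on captured states is dropped *)
Definition round_step (theta : R) (m : {ffun state -> R}) : {ffun state -> R} :=
  step (cop_kernel theta) (step robber_kernel m).

Definition start_distr (c r : V) : {ffun state -> R} :=
  [ffun s => if s == (c, r) then 1 else 0].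

Definition distr_after (theta : R) (c r : V) (n : nat) : {ffun state -> R} :=
  iter n (round_step theta) (start_distr c r).

(* P(X > n) : no capture during the first n rounds *)
Definition P_gt (theta : R) (c r : V) (n : nat) : R :=
  \sum_(s : state | s.1 != s.2) distr_after theta c r n s.

(* P(X = n) for n >= 1 *)
Definition P_eq (theta : R) (c r : V) (n : nat) : R :=
  P_gt theta c r n.-1 - P_gt theta c r n.

Definition expected_capture_time (theta : R) (c r : V) : \bar R :=
  (\sum_(1 <= n <oo) ((n%:R * P_eq theta c r n)%:E))%E.

End TipsyGame.

Definition c5adj : rel 'I_5 := fun x y =>
  (((x.+1 %% 5)%N == y) || ((y.+1 %% 5)%N == x)).

(* On C_5 every live state is at distance 1 or 2, and the probability that a
   move sends a state to each distance class depends only on the class of the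
   state.  The surviving masses a_n, b_n at distances 1 and 2 therefore obey a
   linear recursion contracting by 3/4.  Since E[X] = sum_n P(X > n) =
   sum_n (a_n + b_n), and the potential E1 a_n + E2 b_n drops by exactly
   a_n + b_n every round, E[X] is the initial potential. *)

From Pilot Require Import Defs.
From HB Require Import structures.
From mathcomp Require Import all_boot all_order all_algebra.
From mathcomp Require Import all_classical all_reals all_analysis.
From mathcomp Require Import ring lra.
Import Order.TTheory GRing.Theory Num.Theory.
Import numFieldNormedType.Exports.
Set Implicit Arguments. Unset Strict Implicit. Unset Printing Implicit Defensive.
Local Open Scope classical_set_scope.
Local Open Scope ring_scope.

Lemma natmul_expr_le_sum (R : numDomainType) (q : R) n :
  0 <= q <= 1 -> n%:R * q ^+ n <= \sum_(k < n) q ^+ k.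
Proof.
move=> /andP[q0 q1]; elim: n => [|n IH]; first by rewrite mul0r big_ord0.
rewrite big_ord_recr /= -natr1 mulrDl mul1r exprS mulrCA.
by apply: lerD; [apply: le_trans IH | ]; rewrite ler_piMl ?mulr_ge0 ?exprn_ge0.
Qed.

Section TailSum.
Variable R : realType.

Lemma cvg_natmul_expr (q : R) : 0 <= q < 1 -> (n%:R * q ^+ n) @[n --> \oo] --> 0.
Proof.
move=> /andP[q0 q1]; pose r := (1 + q) / 2.
have r0 : 0 <= r by rewrite /r; lra.
have r1 : r < 1 by rewrite /r; lra.
have qr : q <= r ^+ 2 by rewrite /r; nra.
have geom_sum_le n : \sum_(k < n) r ^+ k <= (1 - r)^-1.
  rewrite -[X in _ <= X]mulr1 ler_pdivlMl ?subr_gt0 // -opprB mulNr -subrX1.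
  by rewrite opprB lerBlDr lerDl exprn_ge0.
apply: (@squeeze_cvgr _ _ _ _ (fun _ => 0) (geometric (1 - r)^-1 r)).
- apply: nearW => n; rewrite mulr_ge0 ?exprn_ge0 //=.
  apply: (@le_trans _ _ (n%:R * r ^+ n * r ^+ n)).
    by rewrite -mulrA -exprMn -expr2 ler_wpM2l // lerXn2r ?nnegrE ?exprn_ge0.
  apply: ler_wpM2r; first exact: exprn_ge0.
  by apply: le_trans (geom_sum_le n); apply: natmul_expr_le_sum; rewrite r0 ltW.
- exact: cvg_cst.
- by apply: cvg_geometric; rewrite ger0_norm.
Qed.

Lemma natmul_diff_telescope (p Phi : nat -> R) N :
  (forall n, Phi n = p n + Phi n.+1) ->
  \sum_(1 <= n < N.+1) n%:R * (p n.-1 - p n) = Phi 0 - (Phi N + N%:R * p N).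
Proof.
move=> PhiS; elim: N => [|N IH]; first by rewrite big_geq // mul0r addr0 subrr.
by rewrite big_nat_recr //= IH (PhiS N) -natr1; ring.
Qed.

(* E[X] = sum_n P(X > n), for the survival function p n = P(X > n) with tail
   sums Phi. *)
Lemma tail_sum_expectation (p Phi : nat -> R) :
  (forall n, Phi n = p n + Phi n.+1) ->
  Phi n @[n --> \oo] --> 0 -> n%:R * p n @[n --> \oo] --> 0 ->
  (\sum_(1 <= n <oo) (n%:R * (p n.-1 - p n))%:E = (Phi 0)%:E)%E.
Proof.
move=> PhiS Phi0 np0.
pose S N := \sum_(1 <= n < N) n%:R * (p n.-1 - p n).
have S_cvg : S N @[N --> \oo] --> Phi 0.
  have : [sequence S N.+1]_N @ \oo --> Phi 0 - (0 + 0).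
    under [X in X @ _]boolp.funext do rewrite /= /S (natmul_diff_telescope _ PhiS).
    exact: cvgB (cvg_cst _) (cvgD Phi0 np0).
  by rewrite addr0 subr0 cvg_shiftS.
rewrite (_ : (fun N => _) = EFin \o S); last by apply: boolp.funext => N /=; rewrite sumEFin.
by rewrite EFin_lim ?(cvg_lim _ S_cvg) //; apply/cvg_ex; exists (Phi 0).
Qed.

End TailSum.

Lemma sum_step (R : realType) (V : finType) (K : state V -> state V -> R)
    (m : {ffun state V -> R}) (P : pred (state V)) :
  \sum_(t | P t) step K m t = \sum_(s | s.1 != s.2) m s * \sum_(t | P t) K s t.
Proof.
under eq_bigr do rewrite ffunE.
by rewrite exchange_big; apply: eq_bigr => s _; rewrite mulr_sumr.
Qed.

(* [ord_enum 5] is blocked under [vm_compute] by the opaque [idP]. *)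
Definition c5_vertices : seq 'I_5 :=
  [:: @Ordinal 5 0 isT; @Ordinal 5 1 isT; @Ordinal 5 2 isT;
      @Ordinal 5 3 isT; @Ordinal 5 4 isT].

Definition c5_states : seq (state 'I_5) :=
  [seq (x, y) | x <- c5_vertices, y <- c5_vertices].

Lemma mem_c5_vertices (x : 'I_5) : x \in c5_vertices.
Proof. by case: x => [[|[|[|[|[|k]]]]] Hk]. Qed.

Lemma mem_c5_states (s : state 'I_5) : s \in c5_states.
Proof. by case: s => x y; rewrite allpairs_f ?mem_c5_vertices. Qed.

Lemma perm_c5_vertices : perm_eq (index_enum 'I_5) c5_vertices.
Proof.
apply: uniq_perm; [exact: index_enum_uniq | by [] | move=> x].
by rewrite mem_index_enum mem_c5_vertices.
Qed.

Lemma perm_c5_states : perm_eq (index_enum (state 'I_5)) c5_states.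
Proof.
apply: uniq_perm; [exact: index_enum_uniq | by vm_compute | move=> s].
by rewrite mem_index_enum mem_c5_states.
Qed.

Fixpoint c5_ball (k : nat) (x y : 'I_5) : bool :=
  if k is k'.+1 then
    c5_ball k' x y || has (fun u => c5_ball k' x u && c5adj u y) c5_vertices
  else y == x.

Lemma c5_ballS k x y :
  c5_ball k.+1 x y = c5_ball k x y || has (fun u => c5_ball k x u && c5adj u y) c5_vertices.
Proof. by []. Qed.

Lemma in_ball_c5 k x y : (y \in Defs.ball c5adj k x) = c5_ball k x y.
Proof.
elim: k y => [|k IH] y; first by rewrite /= inE.
rewrite c5_ballS [Defs.ball _ _.+1 _]/= finset.in_setU IH inE; congr (_ || _).
apply/existsP/hasP => [[u /andP[ux uy]] | [u _ /andP[ux uy]]].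
  by exists u; rewrite ?mem_c5_vertices // -IH ux.
by exists u; rewrite IH ux.
Qed.

Definition c5_dist (x y : 'I_5) : nat := find (fun k => c5_ball k x y) (iota 0 5).

Lemma gdist_c5 x y : gdist c5adj x y = c5_dist x y.
Proof. by rewrite /gdist card_ord; apply: eq_find => k; exact: in_ball_c5. Qed.

Definition sdist (s : state 'I_5) : nat := c5_dist s.1 s.2.

Definition c5_greedy (c r w : 'I_5) : bool := c5adj c w && (c5_dist w r < c5_dist c r)%N.

Lemma in_greedy_c5 c r w : (w \in greedy c5adj c r) = c5_greedy c r w.
Proof. by rewrite inE /c5_greedy !gdist_c5. Qed.

Definition robber_move (s t : state 'I_5) : bool := (t.1 == s.1) && c5adj s.2 t.2.
Definition cop_move (s t : state 'I_5) : bool := (t.2 == s.2) && c5adj s.1 t.1.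
Definition greedy_move (s t : state 'I_5) : bool := cop_move s t && c5_greedy s.1 s.2 t.1.

Definition class_count (move : rel (state 'I_5)) s j : nat :=
  count (fun t => move s t && (sdist t == j)) c5_states.

(* Number of neighbours in distance class [j] reached from distance class [i],
   for a uniformly random move and for a greedy move, on C_5 with i, j in {1, 2}. *)
Definition nbr_count (i j : nat) : nat := (i == 2%N) || (j == 2%N).
Definition greedy_count (i j : nat) : nat := (i == 2%N) && (j == 1%N).

Lemma c5_sdist_live : all (fun s => (s.1 != s.2) == (sdist s \in [:: 1; 2]%N)) c5_states.
Proof. by vm_compute. Qed.

Lemma live_sdist s : (s.1 != s.2) = (sdist s \in [:: 1; 2]%N).
Proof. exact: eqP (allP c5_sdist_live s (mem_c5_states s)). Qed.

Lemma c5_regular : all (fun v => count (c5adj v) c5_vertices == 2%N) c5_vertices.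
Proof. by vm_compute. Qed.

Lemma c5_greedy_unique :
  all (fun s => (s.1 != s.2) ==> (count (c5_greedy s.1 s.2) c5_vertices == 1%N)) c5_states.
Proof. by vm_compute. Qed.

Lemma c5_class_counts :
  all (fun s => (s.1 != s.2) ==> all (fun j =>
         [&& class_count robber_move s j == nbr_count (sdist s) j,
             class_count cop_move s j == nbr_count (sdist s) j &
             class_count greedy_move s j == greedy_count (sdist s) j]) [:: 1; 2]%N)
      c5_states.
Proof. by vm_compute. Qed.

Section C5Kernels.
Variables (R : realType) (theta : R).

Lemma card_c5 (A : {set 'I_5}) : #|A| = count (mem A) c5_vertices.
Proof. by rewrite -sum1_card (perm_big _ perm_c5_vertices) sum1_count. Qed.

Lemma deg_c5 v : deg R c5adj v = 2.
Proof.
rewrite /deg card_c5 (@eq_count _ _ (c5adj v)) => [|w]; last by rewrite /= inE.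
by rewrite (eqP (allP c5_regular v (mem_c5_vertices v))).
Qed.

Lemma card_greedy_c5 (s : state 'I_5) : s.1 != s.2 -> #|greedy c5adj s.1 s.2| = 1%N.
Proof.
move=> live; rewrite card_c5 (@eq_count _ _ (c5_greedy s.1 s.2)) => [|w]; last first.
  by rewrite /= in_greedy_c5.
by apply/eqP; have := allP c5_greedy_unique s (mem_c5_states s); rewrite live.
Qed.

Lemma sum_class_if (j : nat) (b : pred (state 'I_5)) (x : R) :
  \sum_(t | sdist t == j) (if b t then x else 0) =
  x *+ count (fun t => b t && (sdist t == j)) c5_states.
Proof.
rewrite (perm_big _ perm_c5_states) -big_mkcondr big_const_seq iter_addr addr0.
by congr (_ *+ _); apply: eq_count => t; rewrite andbC.
Qed.

Lemma class_countsE s j : s.1 != s.2 -> j \in [:: 1; 2]%N ->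
  [/\ class_count robber_move s j = nbr_count (sdist s) j,
      class_count cop_move s j = nbr_count (sdist s) j &
      class_count greedy_move s j = greedy_count (sdist s) j].
Proof.
move=> live jcl; have := allP c5_class_counts s (mem_c5_states s).
by rewrite live => /allP/(_ j jcl)/and3P[/eqP-> /eqP-> /eqP->].
Qed.

Lemma robber_class_sum s j : s.1 != s.2 -> j \in [:: 1; 2]%N ->
  \sum_(t | sdist t == j) robber_kernel R c5adj s t = (nbr_count (sdist s) j)%:R / 2.
Proof.
move=> live jcl; have [<- _ _] := class_countsE live jcl.
rewrite mulr_natl -sum_class_if; apply: eq_bigr => t _.
by rewrite /robber_kernel deg_c5.
Qed.

Lemma cop_class_sum s j : s.1 != s.2 -> j \in [:: 1; 2]%N ->
  \sum_(t | sdist t == j) cop_kernel c5adj theta s t =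
  theta / 2 * (nbr_count (sdist s) j)%:R + (1 - theta) * (greedy_count (sdist s) j)%:R.
Proof.
move=> live jcl; have [_ <- <-] := class_countsE live jcl.
rewrite !mulr_natr -!sum_class_if -big_split /=; apply: eq_bigr => t _.
rewrite /cop_kernel /greedy_move /cop_move deg_c5 in_greedy_c5 card_greedy_c5 // divr1.
by case: ((t.2 == s.2) && c5adj s.1 t.1); case: c5_greedy; rewrite ?addr0.
Qed.

Definition mass (j : nat) (m : {ffun state 'I_5 -> R}) : R := \sum_(s | sdist s == j) m s.

Lemma sum_live (F : state 'I_5 -> R) :
  \sum_(s | s.1 != s.2) F s = \sum_(s | sdist s == 1%N) F s + \sum_(s | sdist s == 2%N) F s.
Proof.
rewrite (bigID (fun s => sdist s == 1%N)) /=; congr (_ + _); apply: eq_bigl => s;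
  by rewrite live_sdist !inE; case: (sdist s) => [|[|[|]]].
Qed.

Lemma mass_step (K : state 'I_5 -> state 'I_5 -> R) (k : nat -> R) m j :
  (forall s, s.1 != s.2 -> \sum_(t | sdist t == j) K s t = k (sdist s)) ->
  mass j (step K m) = k 1%N * mass 1 m + k 2%N * mass 2 m.
Proof.
move=> Kclass; rewrite /mass sum_step sum_live !mulr_sumr.
by congr (_ + _); apply: eq_bigr => s /eqP ds;
  rewrite Kclass ?live_sdist ds // mulrC.
Qed.

Lemma mass_robber_step m j : j \in [:: 1; 2]%N ->
  mass j (step (robber_kernel R c5adj) m) =
  (nbr_count 1 j)%:R / 2 * mass 1 m + (nbr_count 2 j)%:R / 2 * mass 2 m.
Proof.
move=> jcl; apply: (mass_step (k := fun i => (nbr_count i j)%:R / 2)) => s live.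
exact: robber_class_sum.
Qed.

Lemma mass_cop_step m j : j \in [:: 1; 2]%N ->
  mass j (step (cop_kernel c5adj theta) m) =
  (theta / 2 * (nbr_count 1 j)%:R + (1 - theta) * (greedy_count 1 j)%:R) * mass 1 m +
  (theta / 2 * (nbr_count 2 j)%:R + (1 - theta) * (greedy_count 2 j)%:R) * mass 2 m.
Proof.
move=> jcl; apply: (mass_step (k := fun i =>
  theta / 2 * (nbr_count i j)%:R + (1 - theta) * (greedy_count i j)%:R)) => s live.
exact: cop_class_sum.
Qed.

Lemma mass1_round_step m :
  mass 1 (round_step c5adj theta m) = (1 - theta / 2) * (mass 1 m + mass 2 m) / 2.
Proof. by rewrite mass_cop_step // !mass_robber_step // /nbr_count /greedy_count /=; field. Qed.

Lemma mass2_round_step m :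
  mass 2 (round_step c5adj theta m) = theta / 4 * mass 1 m + theta / 2 * mass 2 m.
Proof. by rewrite mass_cop_step // !mass_robber_step // /nbr_count /greedy_count /=; field. Qed.

End C5Kernels.

Section C5Game.
Variables (R : realType) (theta : R) (c r : 'I_5).

Let a n := mass 1 (distr_after c5adj theta c r n).
Let b n := mass 2 (distr_after c5adj theta c r n).

Lemma mass_start j : mass j (start_distr R c r) = (sdist (c, r) == j)%:R.
Proof.
rewrite /mass big_mkcond (bigD1 (c, r)) //= big1 => [|s /negbTE scr]; rewrite ffunE.
  by rewrite eqxx addr0; case: eqP.
by rewrite scr; case: ifP.
Qed.

Lemma P_gt_mass n : P_gt c5adj theta c r n = a n + b n.
Proof. exact: sum_live. Qed.

Lemma mass_distr_afterS n :
  a n.+1 = (1 - theta / 2) * (a n + b n) / 2 /\ b n.+1 = theta / 4 * a n + theta / 2 * b n.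
Proof. by rewrite /a /b /distr_after iterS mass1_round_step mass2_round_step. Qed.

Lemma mass_distr_after_ge0 n : 0 <= theta <= 1 -> 0 <= a n /\ 0 <= b n.
Proof.
move=> /andP[t0 t1]; elim: n => [|n [a_ge0 b_ge0]]; first by rewrite /a /b !mass_start.
have [-> ->] := mass_distr_afterS n.
by split; [apply: mulr_ge0; first apply: mulr_ge0 | apply: addr_ge0; apply: mulr_ge0];
  lra.
Qed.

Lemma P_gt_le n : 0 <= theta <= 1 -> P_gt c5adj theta c r n <= (3 / 4) ^+ n.
Proof.
move=> theta01; rewrite P_gt_mass; elim: n => [|n IH].
  rewrite /a /b !mass_start expr0.
  by case: (sdist (c, r)) => [|[|[|k]]]; rewrite /= ?mulr0n ?mulr1n ?addr0 ?add0r ?ler01.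
have [a_ge0 b_ge0] := mass_distr_after_ge0 n theta01.
have [-> ->] := mass_distr_afterS n; rewrite exprS.
have : b n * theta <= b n by rewrite ler_piMr //; case/andP: theta01.
have : 3 / 4 * (a n + b n) <= 3 / 4 * (3 / 4) ^+ n by rewrite ler_pM2l //; lra.
nra.
Qed.

Let denom := (1 - theta / 4) * (2 - (1 / 2 - theta / 4)) - 1.

(* The coefficients are the expected capture times from distances 1 and 2: the
   solution E of E = 1 + M E for the one-round matrix M of [mass_distr_afterS]. *)
Let potential n := (1 - theta / 4) / denom * a n + 1 / denom * b n.

Lemma denom_gt0 : 0 <= theta <= 1 -> 0 < denom.
Proof. by move=> /andP[t0 t1]; rewrite /denom; nra. Qed.

Lemma potentialS n : 0 <= theta <= 1 -> potential n = (a n + b n) + potential n.+1.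
Proof.
move=> /denom_gt0; rewrite /potential /denom => denom_gt0.
by have [-> ->] := mass_distr_afterS n; field; rewrite gt_eqF //; nra.
Qed.

Lemma potential_bound n : 0 <= theta <= 1 ->
  0 <= potential n <= ((1 - theta / 4) / denom + 1 / denom) * (3 / 4) ^+ n.
Proof.
move=> theta01; have [a_ge0 b_ge0] := mass_distr_after_ge0 n theta01.
have := P_gt_le n theta01; rewrite P_gt_mass.
have denom_gt0 := denom_gt0 theta01; case/andP: theta01 => t0 t1.
have E1_ge0 : 0 <= (1 - theta / 4) / denom by apply: divr_ge0; lra.
have E2_ge0 : 0 <= 1 / denom by apply: divr_ge0; lra.
rewrite /potential => ab_le; apply/andP; split; first by apply: addr_ge0; apply: mulr_ge0.
rewrite [leRHS]mulrDl; apply: lerD; apply: ler_wpM2l => //; lra.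
Qed.

Lemma expected_capture_time_c5 : 0 <= theta <= 1 ->
  expected_capture_time c5adj theta c r =
  ((1 - theta / 4) / denom * (sdist (c, r) == 1%N)%:R + 1 / denom * (sdist (c, r) == 2%N)%:R)%:E.
Proof.
move=> theta01; rewrite -!mass_start.
apply: (tail_sum_expectation (Phi := potential)) => [n | | ].
- by rewrite P_gt_mass potentialS.
- apply: (@squeeze_cvgr _ _ _ _ (fun _ => 0) (geometric _ (3 / 4))).
  + by apply: nearW => n; exact: potential_bound.
  + exact: cvg_cst.
  + by apply: cvg_geometric; rewrite ger0_norm //; lra.
- apply: (@squeeze_cvgr _ _ _ _ (fun _ => 0) (fun n => n%:R * (3 / 4) ^+ n)).
  + apply: nearW => n; have [a_ge0 b_ge0] := mass_distr_after_ge0 n theta01.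
    by rewrite /= mulr_ge0 ?ler_wpM2l ?P_gt_le // P_gt_mass addr_ge0.
  + exact: cvg_cst.
  + by apply: cvg_natmul_expr; lra.
Qed.

End C5Game.

Theorem mainTheorem10 (R : realType) (theta : R) (c r : 'I_5) :
  0 <= theta <= 1 ->
  let psi := 1 / 2 - theta / 4 in
  (gdist c5adj c r = 1%N ->
     expected_capture_time c5adj theta c r =
       ((1 - theta / 4) / ((1 - theta / 4) * (2 - psi) - 1))%:E) /\
  (gdist c5adj c r = 2%N ->
     expected_capture_time c5adj theta c r =
       (1 / ((1 - theta / 4) * (2 - psi) - 1))%:E).
Proof.
move=> theta01 psi; rewrite expected_capture_time_c5 // /sdist /= -gdist_c5.
by split=> ->; rewrite /= ?mulr1 ?mulr0 ?addr0 ?add0r.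
Qed.
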